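(* Let $G$ be a graph, $X\subseteq V(G)$ with $F:=G-X$ a pseudoforest, and $k$ an integer. Assume that: (1) there is no $v\in X$ with $\mathrm{Conf}_F(\{v\})\ge |X|$; (2) there are no distinct non-adjacent $u,v\in X$ with $\mathrm{Conf}_F(\{u,v\})\ge|X|$; (3) for all distinct $u,v,w\in X$ such that $\{u,v,w\}$ is independent in $G$ and $\mathrm{Conf}_F(\{u,v,w\})\ge|X|$, there is an anchor triangle $P$ with $N_G(V(P))=\{u,v,w\}$. Let $P$ be a connected component of $F$ which is not a non-redundant anchor triangle and such that $\mathrm{Conf}_P(X')=0$ for every chunk $X'$. Then $G$ has an independent set of size at least $k$ if and only if $G-V(P)$ has an independent set of size at least $k-\alpha(P)$.
   Context: All graphs are finite, simple and undirected; a pseudoforest is a graph each of whose connected components contains at most one cycle. $\alpha(H)$ is the independence number of $H$. For a subgraph $F'\subseteq F$ and $X'\subseteq X$, $\mathrm{Conf}_{F'}(X') := \alpha(F') - \alpha(F' - N_G(X'))$, where $N_G(S)$ is the set of vertices outside $S$ adjacent to some vertex of $S$. A chunk is a set $X'\subseteq X$ that is independent in $G$, satisfies $1\le |X'|\le 3$, and has $\mathrm{Conf}_F(X') < |X|$. An anchor triangle is a connected component $P$ of $F$ with $V(P)=\{p_1,p_2,p_3\}$ such that there are vertices $x_1,x_2,x_3\in X$ with $N_G(p_1)=\{p_2,p_3,x_1\}$, $N_G(p_2)=\{p_1,p_3,x_2\}$, $N_G(p_3)=\{p_1,p_2,x_3\}$; it is non-redundant if no other anchor triangle has the same open neighborhood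 in $G$. *)

(* A graph G is a symmetric irreflexive relation e on a finType T;
   (induced) subgraphs of G are given by their vertex sets S : {set T}. *)
From mathcomp Require Import all_boot all_order all_algebra.
Set Implicit Arguments. Unset Strict Implicit. Unset Printing Implicit Defensive.

Section GraphDefs.
Variables (T : finType) (e : rel T).

Definition indep (I : {set T}) : bool :=
  [forall x in I, forall y in I, ~~ e x y].

Definition alpha (S : {set T}) : nat :=
  \max_(I : {set T} | (I \subset S) && indep I) #|I|.

Definition nbhd (S : {set T}) : {set T} :=
  [set y | (y \notin S) && [exists x in S, e x y]].

Definition conf (S Xp : {set T}) : nat :=
  alpha S - alpha (S :\: nbhd Xp).

Definition connected_in (P : {set T}) : Prop :=
  forall x y, x \in P -> y \in P ->
    connect (fun a b => [&& a \in P, b \in P & e a b]) x y.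

Definition component (S P : {set T}) : Prop :=
  [/\ P \subset S, P != set0, connected_in P &
      forall x y, x \in P -> y \in S :\: P -> ~~ e x y].

Definition edges_in (P : {set T}) : {set {set T}} :=
  [set E : {set T} | [&& #|E| == 2, E \subset P &
                        [forall x in E, forall y in E, (x != y) ==> e x y]]].

(* G[S] is a pseudoforest: every connected component has at most one cycle,
   i.e. (equivalently, for a connected graph) at most as many edges as vertices *)
Definition pseudoforest (S : {set T}) : Prop :=
  forall P, component S P -> #|edges_in P| <= #|P|.

Definition anchor_triangle (X P : {set T}) : Prop :=
  component (~: X) P /\
  exists p1 p2 p3 x1 x2 x3,
    [/\ P = [set p1; p2; p3] /\ [&& p1 != p2, p1 != p3 & p2 != p3],
        [&& x1 \in X, x2 \in X & x3 \in X],
        [set y | e p1 y] = [set p2; p3; x1],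
        [set y | e p2 y] = [set p1; p3; x2] &
        [set y | e p3 y] = [set p1; p2; x3]].

Definition nonredundant_anchor_triangle (X P : {set T}) : Prop :=
  anchor_triangle X P /\
  forall Q, anchor_triangle X Q -> Q <> P -> nbhd Q <> nbhd P.

Definition chunk (X Xp : {set T}) : Prop :=
  [/\ Xp \subset X, indep Xp, 1 <= #|Xp| <= 3 & conf (~: X) Xp < #|X|].

End GraphDefs.

From mathcomp Require Import all_boot all_order all_algebra zify.
From Stdlib Require Import Classical.
Set Implicit Arguments. Unset Strict Implicit. Unset Printing Implicit Defensive.

(* One direction is clear: an independent set of G meets P in at most alpha(P)
   vertices. Conversely, let I be independent in G - P; we find an independent set of
   size |I| + alpha(P) in G by induction on |I :&: X|. If deleting the neighbourhood of
   I :&: X from P does not lower alpha(P), add a maximum independent set of what remains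
   of P. Otherwise we use a Helly-type property of pseudoforests: if deleting D lowers
   alpha, so does deleting some subset of D with at most 3 vertices (pendant vertices are
   peeled off, a disconnected graph is handled componentwise, and in a connected
   pseudoforest of minimum degree 2 deleting any vertex leaves a forest, for which the
   bound is 2). This gives Z \subset I :&: X with |Z| <= 3 and Conf_P(Z) > 0, so Z is not
   a chunk; hypotheses (1) and (2) force |Z| = 3, and (3) with the non-redundancy of P
   yields an anchor triangle Q <> P with N(Q) = Z. Exchanging a vertex of Z for its
   private neighbour in Q keeps I independent and of the same size while decreasing
   |I :&: X|. *)

Ltac setdec :=
  rewrite !inE;
  repeat match goal with |- context [?a == ?b] => case: (a =P b) => [/= ?|/= ?]; subst end;
  repeat match goal with |- context [?a \in ?b] => case: (a \in b) end;
  rewrite /= ?andbF ?andbT ?orbF ?orbT //.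

Section Independence.
Variables (T : finType) (e : rel T).
Hypotheses (esym : symmetric e) (eirr : irreflexive e).

Definition nb (u : T) : {set T} := [set y | e u y].

Lemma indepP (I : {set T}) :
  reflect {in I &, forall x y, ~~ e x y} (indep e I).
Proof.
apply: (iffP forall_inP) => [H x y xI yI | H x xI].
  by move/forall_inP: (H x xI) => /(_ y yI).
by apply/forall_inP => y yI; apply: H.
Qed.

Lemma indepS (A B : {set T}) : A \subset B -> indep e B -> indep e A.
Proof.
by move=> /subsetP sAB /indepP iB; apply/indepP => x y /sAB xB /sAB; apply: iB.
Qed.

Lemma indepU (A B : {set T}) : indep e A -> indep e B ->
  {in A & B, forall x y, ~~ e x y} -> indep e (A :|: B).
Proof.
move=> /indepP iA /indepP iB AB; apply/indepP => x y.
case/setUP=> [xA|xB] /setUP [yA|yB].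
- exact: iA.
- exact: AB.
- by rewrite esym; apply: AB.
- exact: iB.
Qed.

Lemma indepU1 (x : T) (I : {set T}) : indep e I ->
  {in I, forall y, ~~ e x y} -> indep e (x |: I).
Proof.
move=> iI xI; apply: indepU => //; last by move=> _ y /set1P ->; apply: xI.
by apply/indepP => _ _ /set1P -> /set1P ->; rewrite eirr.
Qed.

Lemma leq_card_alpha (S I : {set T}) :
  I \subset S -> indep e I -> #|I| <= alpha e S.
Proof.
move=> sIS iI; rewrite /alpha.
apply: (@leq_bigmax_cond _ (fun J : {set T} => (J \subset S) && indep e J)
  (fun J : {set T} => #|J|)).
by rewrite sIS.
Qed.

Lemma alpha_witness (S : {set T}) :
  exists I : {set T}, [/\ I \subset S, indep e I & #|I| = alpha e S].
Proof.
have [|I] := @eq_bigmax_cond _ [pred I : {set T} | (I \subset S) && indep e I]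
  (fun I : {set T} => #|I|).
  by apply/card_gt0P; exists set0; rewrite inE sub0set; apply/indepP => x y; rewrite inE.
by rewrite inE => /andP [sIS iI] eqI; exists I.
Qed.

Lemma alphaS (S S' : {set T}) : S \subset S' -> alpha e S <= alpha e S'.
Proof.
move=> sSS'; have [I [sIS iI <-]] := alpha_witness S.
exact: leq_card_alpha (subset_trans sIS sSS') iI.
Qed.

Lemma alpha_setID (S C : {set T}) :
  {in S :&: C & S :\: C, forall x y, ~~ e x y} ->
  alpha e S = alpha e (S :&: C) + alpha e (S :\: C).
Proof.
move=> noedge; apply/eqP; rewrite eqn_leq; apply/andP; split.
  have [I [sIS iI <-]] := alpha_witness S.
  rewrite -(cardsID C I) leq_add // leq_card_alpha ?setSI ?setSD //.
    exact: indepS (subsetIl _ _) iI.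
  exact: indepS (subsetDl _ _) iI.
have [J1 [s1 i1 <-]] := alpha_witness (S :&: C).
have [J2 [s2 i2 <-]] := alpha_witness (S :\: C).
have J12 : J1 :&: J2 = set0.
  apply/setP => x; rewrite !inE; apply/negP => /andP [/(subsetP s1) + /(subsetP s2)].
  by rewrite !inE => /andP [_ ->] /andP [].
rewrite -cardsUI J12 cards0 addn0 leq_card_alpha //.
  by rewrite subUset (subset_trans s1 (subsetIl _ _)) (subset_trans s2 (subsetDl _ _)).
by apply: indepU => // x y /(subsetP s1) + /(subsetP s2); apply: noedge.
Qed.

Lemma alpha_rec (V : {set T}) u : u \in V ->
  alpha e V = maxn (alpha e (V :\ u)) (alpha e (V :\: (u |: nb u))).+1.
Proof.
move=> uV; apply/eqP; rewrite eqn_leq geq_max alphaS ?subsetDl //=; apply/andP; split.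
  have [I [sIS iI <-]] := alpha_witness V.
  case: (boolP (u \in I)) => uI; last first.
    by rewrite leq_max leq_card_alpha // subsetD1 sIS.
  rewrite leq_max (cardsD1 u I) uI ltnS leq_card_alpha ?orbT //; last first.
    exact: indepS (subsetDl _ _) iI.
  apply/subsetP => x; rewrite !inE negb_or => /andP [xu xI].
  by rewrite xu (subsetP sIS x xI) andbT; move/indepP: iI; apply.
have [J [sJ iJ <-]] := alpha_witness (V :\: (u |: nb u)).
have uJ : u \notin J by apply/negP => /(subsetP sJ); rewrite !inE eqxx.
have -> : (#|J|).+1 = #|u |: J| by rewrite cardsU1 uJ.
apply: leq_card_alpha.
  by rewrite subUset sub1set uV (subset_trans sJ) // subsetDl.
apply: indepU1 => // y /(subsetP sJ); rewrite !inE negb_or.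
by case/andP=> /andP [_ ->].
Qed.

(* [u = l] encodes an isolated vertex [l]. *)
Definition pendant (V : {set T}) (l u : T) :=
  (u = l \/ e l u) /\ {in V, forall y, e l y -> y = u}.

Lemma alpha_pendant (V S : {set T}) l u : pendant V l u -> S \subset V -> l \in S ->
  alpha e S = (alpha e (S :\: [set l; u])).+1.
Proof.
move=> [lu Nl] sSV lS; apply/eqP; rewrite eqn_leq; apply/andP; split.
  have [I [sIS iI <-]] := alpha_witness S.
  have I2 : #|I :&: [set l; u]| <= 1.
    case: lu => [->|elu].
      by rewrite setUid (leq_trans (subset_leq_card (subsetIr _ _))) ?cards1.
    have [lI|lI] := boolP (l \in I); last first.
      by rewrite -(cards1 u) subset_leq_card //; apply/subsetP => x; move: lI; setdec.
    have uI : u \notin I by apply: contraL elu => uI; move/indepP: iI; apply.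
    by rewrite -(cards1 l) subset_leq_card //; apply/subsetP => x; move: uI; setdec.
  rewrite -(cardsID [set l; u] I) addnC -addn1 leq_add // leq_card_alpha ?setSD //.
  exact: indepS (subsetDl _ _) iI.
have [J [sJ iJ <-]] := alpha_witness (S :\: [set l; u]).
have lJ : l \notin J by apply/negP => /(subsetP sJ); rewrite !inE eqxx.
have -> : (#|J|).+1 = #|l |: J| by rewrite cardsU1 lJ.
apply: leq_card_alpha; first by rewrite subUset sub1set lS (subset_trans sJ) ?subsetDl.
apply: indepU1 => // y yJ; apply/negP => /(Nl y) yu.
have := subsetP sJ y yJ; rewrite !inE yu ?eqxx ?orbT //.
by apply: (subsetP sSV); move: (subsetP sJ y yJ); rewrite inE => /andP [].
Qed.

Lemma alpha_pendant_setD (V D : {set T}) l u : pendant V l u -> l \in V -> l \notin D ->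
  alpha e (V :\: D) = (alpha e ((V :\: [set l; u]) :\: D)).+1.
Proof.
move=> lu lV lD; rewrite (alpha_pendant lu (subsetDl V D)) ?inE ?lD //.
by rewrite !setDDl setUC.
Qed.

Definition alpha_helly (b : nat) (V : {set T}) :=
  forall D : {set T}, alpha e (V :\: D) < alpha e V ->
  exists D' : {set T}, [/\ D' \subset D, #|D'| <= b & alpha e (V :\: D') < alpha e V].

Lemma alpha_helly0 b : alpha_helly b set0.
Proof. by move=> D; rewrite set0D ltnn. Qed.

End Independence.

Section Helly.
Variables (T : finType) (e : rel T).
Hypotheses (esym : symmetric e) (eirr : irreflexive e).

Lemma alpha_helly_pendant b (V : {set T}) l u : 2 <= b -> l \in V -> pendant e V l u ->
  alpha_helly e b (V :\: [set l; u]) -> alpha_helly e b V.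
Proof.
move=> b2 lV lu hW D ltD; set W := V :\: [set l; u].
have aV : alpha e V = (alpha e W).+1 := alpha_pendant esym eirr lu (subxx V) lV.
have aVD := alpha_pendant_setD esym eirr lu lV.
have [lD|lD] := boolP (l \in D); last first.
  have /hW [D' [sD' cD' ltD']] : alpha e (W :\: D) < alpha e W.
    by move: ltD; rewrite aVD // aV.
  have lD' : l \notin D' by apply: contra lD; apply: (subsetP sD').
  by exists D'; rewrite aVD // aV.
have [uVD|uVD] := boolP (u \in V :\: D); last first.
  exists ([set l; u] :&: D); split; first exact: subsetIr.
    by rewrite (leq_trans (subset_leq_card (subsetIl _ _))) // cards2; case: (l != u); lia.
  by rewrite aV ltnS alphaS //; apply/subsetP => x; move: uVD lD; setdec.
have uV : u \in V by move: uVD; rewrite inE => /andP [].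
have uD : u \notin D by move: uVD; rewrite inE => /andP [].
have ltVD (D' : {set T}) : l \in D' -> u \notin D' ->
    alpha e ((V :\: D') :\: (u |: nb e u)) < alpha e W -> alpha e (V :\: D') < alpha e V.
  move=> lD' uD' ltN; rewrite aV (alpha_rec esym eirr (u := u)) ?inE ?uD' // ltnS geq_max ltN.
  by rewrite alphaS //; apply/subsetP => x; move: lD'; setdec.
(* [D] removes [l] but not [u], so by [alpha_rec] at [u] deleting [D :|: nb e u]
   already lowers [alpha e W]. *)
have /hW [D2 [sD2 cD2 ltD2]] : alpha e (W :\: (D :|: nb e u)) < alpha e W.
  have : alpha e (W :\: (D :|: nb e u)) <= alpha e ((V :\: D) :\: (u |: nb e u)).
    by rewrite alphaS //; apply/subsetP => x; setdec.
  by have := alpha_rec esym eirr uVD; lia.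
have [sD2D|/subsetPn [r rD2 rD]] := boolP (D2 \subset D).
  exists D2; split => //.
  have uD2 : u \notin D2 by apply: contra uD; apply: (subsetP sD2D).
  have [lD2|lD2] := boolP (l \in D2); last by rewrite aVD // aV.
  apply: ltVD => //; apply: leq_ltn_trans ltD2; rewrite alphaS //.
  by apply/subsetP => x; move: lD2; setdec.
exists (l |: (D2 :&: D)); split.
- by rewrite subUset sub1set lD subsetIr.
- have : #|D2 :&: D| < #|D2|.
    rewrite proper_card // properE subsetIl.
    by apply/subsetPn; exists r; rewrite ?inE ?(negbTE rD) ?andbF.
  by rewrite cardsU1; lia.
- apply: ltVD; rewrite ?inE ?eqxx ?(negbTE uD) ?andbF ?orbF //.
    by apply/eqP => ul; move: uD; rewrite ul lD.
  apply: leq_ltn_trans ltD2; rewrite alphaS //; apply/subsetP => x.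
  rewrite !inE negb_or => /andP [/andP [xu xNu] /andP [xD' xV]].
  move: xD'; rewrite !negb_or xV xu !andbT => /andP [-> /= xD'].
  rewrite andbT; apply: contra xD' => xD2; rewrite xD2.
  by move: (subsetP sD2 x xD2); rewrite !inE (negbTE xNu) orbF.
Qed.

Lemma alpha_helly_split b (V C : {set T}) : C \subset V ->
  {in C & V :\: C, forall x y, ~~ e x y} ->
  alpha_helly e b C -> alpha_helly e b (V :\: C) -> alpha_helly e b V.
Proof.
move=> sCV noedge hC hVC.
have aD (D : {set T}) : alpha e (V :\: D) = alpha e (C :\: D) + alpha e ((V :\: C) :\: D).
  rewrite (alpha_setID esym (C := C)); last first.
    move=> x y /setIP [/setDP [_ _] xC] /setDP [/setDP [yV _] yC].
    by apply: noedge; rewrite ?inE ?yC.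
  congr (alpha e _ + alpha e _); last by rewrite !setDDl setUC.
  apply/setP => x; rewrite !inE.
  by case: (boolP (x \in C)) => [/(subsetP sCV) ->|]; rewrite ?andbF ?andbT.
have aV : alpha e V = alpha e C + alpha e (V :\: C) by rewrite -(setD0 V) aD !setD0.
move=> D; rewrite aD aV => ltD.
have [ltC|geC] := ltnP (alpha e (C :\: D)) (alpha e C).
  have [D' [sD' cD' ltD']] := hC D ltC; exists D'; split => //; rewrite aD.
  by have := alphaS e (subsetDl (V :\: C) D'); lia.
have /hVC [D' [sD' cD' ltD']] : alpha e ((V :\: C) :\: D) < alpha e (V :\: C) by lia.
exists D'; split => //; rewrite aD.
by have := alphaS e (subsetDl C D'); lia.
Qed.

Lemma alpha_helly_delete b (V : {set T}) :
  {in V, forall d, alpha_helly e b (V :\ d)} -> alpha_helly e b.+1 V.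
Proof.
move=> hV D ltD.
have [VD0|[d /setIP [dV dD]]] := set_0Vmem (V :&: D).
  have /setDidPl VD : [disjoint V & D] by rewrite -setI_eq0 VD0.
  by rewrite VD ltnn in ltD.
have [ltd|ged] := ltnP (alpha e (V :\ d)) (alpha e V).
  by exists [set d]; rewrite sub1set dD cards1.
have /(hV d dV) [D' [sD' cD' ltD']] : alpha e ((V :\ d) :\: D) < alpha e (V :\ d).
  apply: leq_trans ged; apply: leq_ltn_trans ltD; rewrite alphaS //.
  by apply/subsetP => x; setdec.
exists (d |: D'); split.
- by rewrite subUset sub1set dD sD'.
- by rewrite cardsU1; case: (d \notin D'); lia.
- have : alpha e (V :\: (d |: D')) <= alpha e ((V :\ d) :\: D').
    by rewrite alphaS //; apply/subsetP => x; setdec.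
  by have := alphaS e (subsetDl V [set d]); lia.
Qed.

Lemma alpha_helly_nbhd b (V Y : {set T}) :
  alpha_helly e b V -> alpha e (V :\: nbhd e Y) < alpha e V ->
  exists Z : {set T}, [/\ Z \subset Y, #|Z| <= b & alpha e (V :\: nbhd e Z) < alpha e V].
Proof.
move=> hV /hV [D [sD cD ltD]].
pose f d := odflt d [pick x in Y | e x d].
have fP d : d \in nbhd e Y -> f d \in Y /\ e (f d) d.
  rewrite inE => /andP [_ /exists_inP [x xY exd]]; rewrite /f.
  by case: pickP => [x' /andP [] //|/(_ x)]; rewrite xY exd.
have sfY : f @: D \subset Y by apply/subsetP => _ /imsetP [d /(subsetP sD) /fP [] ? _ ->].
exists (f @: D); split => //; first exact: leq_trans (leq_imset_card _ _) cD.
apply: leq_ltn_trans ltD; rewrite alphaS //; apply/subsetP => y.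
rewrite !inE => /andP [yN ->]; rewrite andbT; apply: contra yN => yD.
have /(subsetP sD) yNY := yD; have [fyY efy] := fP y yNY.
apply/andP; split; last by apply/exists_inP; exists (f y); rewrite ?imset_f.
by apply/negP => /(subsetP sfY) yY; move: yNY; rewrite inE yY.
Qed.

End Helly.

Lemma sum_nat_indicator (U : finType) (A : {set U}) (p : pred U) :
  \sum_(i in A) (p i : nat) = #|[set i in A | p i]|.
Proof.
rewrite -sum1_card big_mkcond [RHS]big_mkcond; apply: eq_bigr => i _.
by rewrite inE; case: (i \in A); case: (p i).
Qed.

Section Degrees.
Variables (T : finType) (e : rel T).
Hypotheses (esym : symmetric e) (eirr : irreflexive e).

Definition deg (A : {set T}) (v : T) := #|[set y in A | e v y]|.

Lemma edge_in_edges_in (A : {set T}) v y : v \in A -> y \in A -> e v y ->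
  [set v; y] \in edges_in e A.
Proof.
move=> vA yA evy; rewrite inE cards2 subUset !sub1set vA yA.
have -> : v != y by apply: contraTneq evy => ->; rewrite eirr.
apply/forall_inP => x /set2P [] -> ; apply/forall_inP => z /set2P [] ->;
  by rewrite ?eqxx ?evy 1?esym ?evy ?implybT.
Qed.

Lemma deg_edges_in (A : {set T}) v : v \in A ->
  deg A v = #|[set E in edges_in e A | v \in E]|.
Proof.
move=> vA; have -> : [set E in edges_in e A | v \in E] =
                     [set [set v; y] | y in [set y in A | e v y]].
  apply/setP => E; rewrite inE; apply/andP/imsetP => [[]|[y]]; last first.
    by rewrite inE => /andP [yA evy] ->; rewrite edge_in_edges_in // !inE eqxx.
  rewrite inE => /and3P [/cards2P [a [b [ab ->]]] sab /forall_inP eE] vE.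
  have aA : a \in A by apply: (subsetP sab); rewrite !inE eqxx.
  have bA : b \in A by apply: (subsetP sab); rewrite !inE eqxx orbT.
  have eab : e a b by move/forall_inP: (eE a (set21 a b)) => /(_ b (set22 a b)); rewrite ab.
  case/set2P: vE => ->; first by exists b; rewrite ?inE ?bA.
  by exists a; rewrite ?inE ?aA 1?esym ?eab // setUC.
rewrite card_in_imset // => y1 y2; rewrite !inE => /andP [_ e1] /andP [_ e2] eq12.
have : y1 \in [set v; y2] by rewrite -eq12 !inE eqxx orbT.
by case/set2P => // y1v; move: e1; rewrite y1v eirr.
Qed.

Lemma handshake (A : {set T}) : \sum_(v in A) deg A v = 2 * #|edges_in e A|.
Proof.
transitivity (\sum_(v in A) \sum_(E in edges_in e A) (v \in E : nat)).
  apply: eq_bigr => v vA; rewrite deg_edges_in // sum_nat_indicator.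
  by apply: eq_card => E; rewrite !inE.
rewrite exchange_big /= mulnC -sum_nat_const; apply: eq_bigr => E.
rewrite inE => /and3P [/eqP E2 sEA _]; rewrite sum_nat_indicator -E2.
by apply: eq_card => x; rewrite !inE andb_idl // => /(subsetP sEA).
Qed.

End Degrees.

Lemma properD2 (U : finType) (V : {set U}) l u : l \in V -> V :\: [set l; u] \proper V.
Proof.
move=> lV; apply: sub_proper_trans (properD1 lV).
by apply/setDS; rewrite sub1set !inE eqxx.
Qed.

Section Forests.
Variables (T : finType) (e : rel T).
Hypotheses (esym : symmetric e) (eirr : irreflexive e).

Definition forest_set (V : {set T}) :=
  forall A : {set T}, A \subset V -> A != set0 -> #|edges_in e A| < #|A|.

Definition pseudoforest_set (V : {set T}) :=
  forall A : {set T}, A \subset V -> #|edges_in e A| <= #|A|.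

Lemma pseudoforest_setS (A V : {set T}) :
  A \subset V -> pseudoforest_set V -> pseudoforest_set A.
Proof. by move=> sAV pV B sBA; apply/pV/(subset_trans sBA). Qed.

Lemma pendant_of_deg (V : {set T}) l : deg e V l <= 1 -> exists u, pendant e V l u.
Proof.
rewrite /deg leq_eqVlt ltnS leqn0 => /orP [/cards1P [u Nl]|/eqP/cards0_eq Nl].
  have : u \in [set y in V | e l y] by rewrite Nl set11.
  rewrite inE => /andP [_ elu]; exists u; split; first by right.
  by move=> y yV ely; apply/set1P; rewrite -Nl inE yV.
exists l; split; first by left.
move=> y yV ely; suff : y \in [set y in V | e l y] by rewrite Nl inE.
by rewrite inE yV.
Qed.

Lemma low_degree_vertex (V : {set T}) : V != set0 -> #|edges_in e V| < #|V| ->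
  exists2 l, l \in V & deg e V l <= 1.
Proof.
move=> V0 ltV; apply/exists_inP; apply: contraTT ltV => /exists_inPn deg2.
rewrite -leqNgt -(leq_pmul2l (isT : 0 < 2)) -handshake // mulnC -sum_nat_const.
by apply: leq_sum => v /deg2; rewrite -ltnNge.
Qed.

Lemma forest_alpha_helly (V : {set T}) : forest_set V -> alpha_helly e 2 V.
Proof.
have [n] := ubnP #|V|; elim: n V => // n IH V ltVn fV.
have [->|V0] := eqVneq V set0; first exact: alpha_helly0.
have [l lV /pendant_of_deg [u lu]] := low_degree_vertex V0 (fV V (subxx V) V0).
apply: (alpha_helly_pendant esym eirr _ lV lu) => //; apply: IH.
  exact: leq_trans (proper_card (properD2 u lV)) ltVn.
by move=> A sA; apply/fV/(subset_trans sA)/subsetDl.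
Qed.

Definition separation (V C : {set T}) :=
  [&& C != set0, C \proper V & [forall x in C, forall y in V :\: C, ~~ e x y]].

Lemma pseudoforest_proper_sparse (V : {set T}) : pseudoforest_set V ->
  {in V, forall v, 1 < deg e V v} -> (forall C : {set T}, ~~ separation V C) ->
  forall A : {set T}, A \proper V -> A != set0 -> #|edges_in e A| < #|A|.
Proof.
(* Summing degrees, 2|V| <= 2|E(A)| + 2|V :\: A| < \sum_V deg_V = 2|E(V)| <= 2|V|,
   the strict step coming from an edge between A and V :\: A. *)
move=> pV deg2 nosep A ltAV A0; have sAV := proper_sub ltAV.
rewrite ltnNge; apply/negP => leA.
have [x xA [y yVA exy]] : exists2 x, x \in A & exists2 y, y \in V :\: A & e x y.
  move: (nosep A); rewrite /separation A0 ltAV /= => /forall_inPn [x xA /forall_inPn [y yVA]].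
  by rewrite negbK => exy; exists x => //; exists y.
have degA v : v \in A -> deg e A v <= deg e V v.
  move=> vA; apply/subset_leq_card/subsetP => z.
  by rewrite !inE => /andP [/(subsetP sAV) -> ->].
have ltx : deg e A x < deg e V x.
  apply/proper_card/properP; split.
    by apply/subsetP => z; rewrite !inE => /andP [/(subsetP sAV) -> ->].
  move: yVA; rewrite inE => /andP [yA yV].
  by exists y; rewrite !inE ?yV ?(negbTE yA) ?exy.
have sumA : \sum_(v in A) deg e A v < \sum_(v in A) deg e V v.
  rewrite (bigD1 x xA) [X in _ < X](bigD1 x xA) /= -addSn leq_add //.
  by apply: leq_sum => v /andP [/degA].
have sumVA : 2 * #|V :\: A| <= \sum_(v in V :\: A) deg e V v.
  by rewrite mulnC -sum_nat_const; apply: leq_sum => v /setDP [vV _]; apply: deg2.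
have sumV : \sum_(v in A) deg e V v + \sum_(v in V :\: A) deg e V v = 2 * #|edges_in e V|.
  by rewrite -handshake // [RHS](big_setID A) /= (setIidPr sAV).
have := handshake esym eirr A; have := pV V (subxx V).
have := cardsID A V; rewrite (setIidPr sAV); lia.
Qed.

Lemma pseudoforest_alpha_helly (V : {set T}) : pseudoforest_set V -> alpha_helly e 3 V.
Proof.
have [n] := ubnP #|V|; elim: n V => // n IH V ltVn pV.
have IHS (A : {set T}) : A \proper V -> alpha_helly e 3 A.
  move=> ltAV; apply: IH; first exact: leq_trans (proper_card ltAV) ltVn.
  exact: pseudoforest_setS (proper_sub ltAV) pV.
have [/exists_inP [l lV /pendant_of_deg [u lu]]|/exists_inPn deg1] :=
  boolP [exists l in V, deg e V l <= 1].
  by apply: (alpha_helly_pendant esym eirr _ lV lu) => //; apply/IHS/properD2.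
have deg2 : {in V, forall v, 1 < deg e V v} by move=> v /deg1; rewrite -ltnNge.
have [/existsP [C /and3P [C0 ltCV /forall_inP noedge]]|/existsPn nosep] :=
  boolP [exists C, separation V C].
  apply: (alpha_helly_split esym (proper_sub ltCV)) (IHS C ltCV) _.
    by move=> x y xC; move/forall_inP: (noedge x xC); apply.
  apply: IHS; rewrite properE subsetDl /=; case/set0Pn: C0 => c cC.
  by apply/subsetPn; exists c; [apply: (subsetP (proper_sub ltCV)) | rewrite inE cC].
apply: alpha_helly_delete => d dV; apply: forest_alpha_helly => A sA.
exact: (pseudoforest_proper_sparse pV deg2 nosep) (sub_proper_trans sA (properD1 dV)).
Qed.

End Forests.

Section Components.
Variables (T : finType) (e : rel T).
Hypotheses (esym : symmetric e) (eirr : irreflexive e).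

Lemma connected_in_cross (P A : {set T}) x y : connected_in e P ->
  x \in P -> y \in P -> x \in A -> y \notin A ->
  exists2 a, a \in P :&: A & exists2 b, b \in P :\: A & e a b.
Proof.
move=> cP xP yP xA yA.
have [/exists_inP [a aPA /exists_inP [b bPA eab]]|/exists_inPn noedge] :=
  boolP [exists a in P :&: A, exists b in P :\: A, e a b]; first by exists a => //; exists b.
have cl : closed (fun a b => [&& a \in P, b \in P & e a b]) A.
  suff cross a b : a \in P -> b \in P -> e a b -> a \in A -> b \in A.
    move=> a b /and3P [aP bP eab]; apply/idP/idP; first exact: cross.
    by apply: cross; rewrite // esym.
  move=> aP bP eab aA; apply: contraT => bA.
  have aPA : a \in P :&: A by rewrite inE aP aA.
  move/exists_inPn: (noedge a aPA) => /(_ b).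
  by rewrite inE bA bP eab => /(_ isT).
by have := closed_connect cl (cP x y xP yP); rewrite xA (negbTE yA).
Qed.

Lemma edges_in0 : edges_in e set0 = set0.
Proof.
by apply/setP => E; rewrite !inE subset0; case: (E =P set0) => [->|]; rewrite ?cards0 ?andbF.
Qed.

Lemma edges_inS (A B : {set T}) : A \subset B -> edges_in e A \subset edges_in e B.
Proof.
move=> sAB; apply/subsetP => E; rewrite !inE => /and3P [-> sEA ->].
by rewrite (subset_trans sEA sAB).
Qed.

Lemma connected_edges_in (P A : {set T}) : connected_in e P ->
  A \subset P -> A != set0 -> #|edges_in e A| + #|P :\: A| <= #|edges_in e P|.
Proof.
move=> cP; have [n] := ubnP #|P :\: A|; elim: n A => // n IH A ltn sAP /set0Pn [x xA].
have [sPA|/subsetPn [z zP zA]] := boolP (P \subset A).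
  have -> : A = P by apply/eqP; rewrite eqEsubset sAP.
  by rewrite setDv cards0 addn0.
have [a /setIP [aP aA] [b /setDP [bP bA] eab]] :=
  connected_in_cross cP (subsetP sAP x xA) zP xA zA.
have PAb : P :\: (b |: A) = (P :\: A) :\ b by rewrite setDDl setUC.
have cardPA : #|P :\: A| = #|P :\: (b |: A)|.+1.
  by rewrite PAb (cardsD1 b (P :\: A)) inE bA bP.
have ltE : #|edges_in e A| < #|edges_in e (b |: A)|.
  apply/proper_card/properP; split; first exact/edges_inS/subsetUr.
  exists [set a; b]; first by rewrite edge_in_edges_in // ?inE ?eqxx ?aA ?orbT.
  rewrite inE; apply: contra bA => /and3P [_ /subsetP sabA _].
  by apply: sabA; rewrite !inE eqxx orbT.
have bA0 : b |: A != set0 by apply/set0Pn; exists b; rewrite !inE eqxx.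
have := IH (b |: A); rewrite subUset sub1set bP sAP -ltnS -cardPA => /(_ ltn isT bA0).
lia.
Qed.

Lemma component_pseudoforest_set (S P : {set T}) :
  component e S P -> pseudoforest e S -> pseudoforest_set e P.
Proof.
move=> cSP pfS A sAP; have [_ _ cP _] := cSP.
have [->|A0] := eqVneq A set0; first by rewrite edges_in0 cards0.
have := connected_edges_in cP sAP A0; have := pfS P cSP.
have := cardsID A P; rewrite (setIidPr sAP); lia.
Qed.

Lemma component_eq (S P Q : {set T}) z : component e S P -> component e S Q ->
  z \in P -> z \in Q -> P = Q.
Proof.
suff sub (P1 Q1 : {set T}) : component e S P1 -> component e S Q1 ->
    z \in P1 -> z \in Q1 -> Q1 \subset P1.
  by move=> cP cQ zP zQ; apply/eqP; rewrite eqEsubset !sub.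
move=> [_ _ _ noedge] [sQ _ cQ _] zP zQ; apply/subsetP => y yQ; apply: contraT => yP.
have [a /setIP [aQ aP] [b /setDP [bQ bP] eab]] := connected_in_cross cQ zQ yQ zP yP.
by move: (noedge a b aP); rewrite inE bP (subsetP sQ b bQ) eab => /(_ isT).
Qed.

End Components.

Section Reduction.
Variables (T : finType) (e : rel T) (X P : {set T}).
Hypotheses (esym : symmetric e) (eirr : irreflexive e).
Hypothesis Hpf : pseudoforest e (~: X).
Hypothesis H1 : forall v, v \in X -> conf e (~: X) [set v] < #|X|.
Hypothesis H2 : forall u v, u \in X -> v \in X -> u != v -> ~~ e u v ->
  conf e (~: X) [set u; v] < #|X|.
Hypothesis H3 : forall u v w, u \in X -> v \in X -> w \in X ->
  u != v -> u != w -> v != w -> indep e [set u; v; w] ->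
  #|X| <= conf e (~: X) [set u; v; w] ->
  exists Q, anchor_triangle e X Q /\ nbhd e Q = [set u; v; w].
Hypothesis HP : component e (~: X) P.
Hypothesis HPnr : ~ nonredundant_anchor_triangle e X P.
Hypothesis HPc : forall Xp, chunk e X Xp -> conf e P Xp = 0.

Lemma extend_off_nbhd (I : {set T}) : I \subset ~: P -> indep e I ->
  alpha e P <= alpha e (P :\: nbhd e (I :&: X)) ->
  exists2 J : {set T}, indep e J & #|I| + alpha e P <= #|J|.
Proof.
move=> sIP iI leP; have [K [sK iK cK]] := alpha_witness e (P :\: nbhd e (I :&: X)).
have [sPX _ _ noedgeP] := HP.
have noedge : {in I & K, forall x y, ~~ e x y}.
  move=> x y xI /(subsetP sK); rewrite !inE negb_and negbK => /andP [yN yP].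
  have [xX|xX] := boolP (x \in X).
    have yX : y \notin X by move: (subsetP sPX y yP); rewrite inE.
    apply: contraL yN => exy; rewrite (negbTE yX) andbF negbK /=.
    by apply/exists_inP; exists x; rewrite ?inE ?xI.
  rewrite esym noedgeP // !inE xX andbT.
  by move: (subsetP sIP x xI); rewrite inE.
exists (I :|: K); first exact: indepU.
have IK0 : I :&: K = set0.
  apply/setP => x; rewrite !inE; apply/negP => /andP [/(subsetP sIP) + /(subsetP sK)].
  by rewrite !inE => /negbTE -> /andP [].
by have := cardsUI I K; rewrite IK0 cards0; lia.
Qed.

Lemma anchor_triangle_other (Z : {set T}) : Z \subset X -> indep e Z -> Z != set0 ->
  #|Z| <= 3 -> alpha e (P :\: nbhd e Z) < alpha e P ->
  exists Q, [/\ anchor_triangle e X Q, Q <> P & nbhd e Q = Z].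
Proof.
move=> sZX iZ Z0 Z3 ltP.
have confZ : #|X| <= conf e (~: X) Z.
  rewrite leqNgt; apply/negP => ltX.
  have Z13 : 1 <= #|Z| <= 3 by rewrite card_gt0 Z0 Z3.
  by have := HPc (And4 sZX iZ Z13 ltX); rewrite /conf; lia.
have [Q [aQ nQ]] : exists Q, anchor_triangle e X Q /\ nbhd e Q = Z.
  have : [|| #|Z| == 1, #|Z| == 2 | 2 < #|Z|] by move: Z0; rewrite -card_gt0; lia.
  case/or3P=> [/cards1P [v Zv]|/cards2P [u [v [uv Zuv]]]|
               /card_gt2P [u [v [w [[uZ vZ wZ] [uv vw wu]]]]]].
  - by move: confZ; rewrite Zv leqNgt H1 // -sub1set -Zv.
  - have [uX vX] : u \in X /\ v \in X.
      by split; apply: (subsetP sZX); rewrite Zuv !inE eqxx ?orbT.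
    have nuv : ~~ e u v by move/indepP: iZ; apply; rewrite Zuv !inE eqxx ?orbT.
    by move: confZ; rewrite Zuv leqNgt H2.
  - have Zuvw : Z = [set u; v; w].
      apply/eqP; rewrite eq_sym eqEcard (leq_trans Z3); last first.
        by apply/card_gt2P; exists u, v, w; rewrite !inE !eqxx ?orbT.
      by rewrite !subUset !sub1set uZ vZ wZ.
    rewrite Zuvw in iZ confZ *; rewrite eq_sym in wu.
    by apply: H3; rewrite // (subsetP sZX).
have [QP|QP] := eqVneq Q P; last by exists Q; split => //; apply/eqP.
apply: NNPP => noQ; apply: HPnr; split; first by rewrite -QP.
by move=> Q' aQ' Q'P eqN; apply: noQ; exists Q'; split; rewrite // eqN -QP nQ.
Qed.

Lemma anchor_triangle_swap (Q I : {set T}) : anchor_triangle e X Q -> Q <> P ->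
  nbhd e Q \subset I -> indep e I -> I \subset ~: P ->
  exists I' : {set T},
    [/\ I' \subset ~: P, indep e I', #|I'| = #|I| & #|I' :&: X| < #|I :&: X|].
Proof.
move=> [cQ [p1 [p2 [p3 [x1 [x2 [x3 [[Qp _] /and3P [x1X x2X x3X] N1 N2 N3]]]]]]]] QP sNI iI sIP.
have [sQX _ _ _] := cQ.
have [p1Q p2Q p3Q] : [/\ p1 \in Q, p2 \in Q & p3 \in Q] by rewrite Qp !inE !eqxx ?orbT.
have e1 : e p1 x1 by move/setP: N1 => /(_ x1); rewrite !inE eqxx !orbT.
have e2 : e p2 x2 by move/setP: N2 => /(_ x2); rewrite !inE eqxx !orbT.
have e3 : e p3 x3 by move/setP: N3 => /(_ x3); rewrite !inE eqxx !orbT.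
have inI p x : p \in Q -> x \in X -> e p x -> x \in I.
  move=> pQ xX epx; apply: (subsetP sNI); rewrite inE; apply/andP; split.
    by apply: contraL xX => /(subsetP sQX); rewrite inE.
  by apply/exists_inP; exists p.
have notI p x : x \in I -> e p x -> p \notin I.
  by move=> xI epx; apply: contraL epx => pI; move/indepP: iI; apply.
have x1I := inI p1 x1 p1Q x1X e1.
have p1I := notI p1 x1 x1I e1.
have p2I := notI p2 x2 (inI p2 x2 p2Q x2X e2) e2.
have p3I := notI p3 x3 (inI p3 x3 p3Q x3X e3) e3.
have p1P : p1 \notin P.
  by apply/negP => p1P; apply: QP; apply: (component_eq esym cQ HP) p1Q p1P.
have p1X : p1 \notin X by move: (subsetP sQX p1 p1Q); rewrite inE.
exists (p1 |: (I :\ x1)); split.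
- by rewrite subUset sub1set inE p1P (subset_trans (subsetDl _ _) sIP).
- apply: (indepU1 esym eirr) => [|y /setD1P [yx1 yI]]; first exact: indepS (subsetDl _ _) iI.
  apply: contraL yI => /[dup] ep1y; have : y \in [set y | e p1 y] by rewrite inE.
  by rewrite N1 !inE (negbTE yx1) orbF => /orP [] /eqP ->.
- by rewrite cardsU1 !inE negb_and p1I orbT (cardsD1 x1 I) x1I.
- apply: leq_ltn_trans (proper_card (properD1 (x := x1) _)); last by rewrite inE x1I.
  apply/subset_leq_card/subsetP => y; rewrite !inE.
  by case: (y =P p1) => [->|_]; rewrite ?(negbTE p1X) ?andbF ?andbA.
Qed.

Lemma extend_indep (I : {set T}) : I \subset ~: P -> indep e I ->
  exists2 J : {set T}, indep e J & #|I| + alpha e P <= #|J|.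
Proof.
have [n] := ubnP #|I :&: X|; elim: n I => // n IH I ltn sIP iI.
have [leP|ltP] := leqP (alpha e P) (alpha e (P :\: nbhd e (I :&: X))).
  exact: extend_off_nbhd.
have hP := pseudoforest_alpha_helly esym eirr (component_pseudoforest_set esym eirr HP Hpf).
have [Z [sZ cZ ltZ]] := alpha_helly_nbhd hP ltP.
have Z0 : Z != set0.
  apply: contraTneq ltZ => ->; have -> : nbhd e set0 = set0.
    by apply/setP => y; rewrite !inE; apply/negbTE/exists_inPn => x; rewrite inE.
  by rewrite setD0 ltnn.
have [Q [aQ QP nQ]] := anchor_triangle_other (subset_trans sZ (subsetIr _ _))
  (indepS (subset_trans sZ (subsetIl _ _)) iI) Z0 cZ ltZ.
have sNI : nbhd e Q \subset I by rewrite nQ (subset_trans sZ (subsetIl _ _)).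
have [I' [sI'P iI' cI' ltI']] := anchor_triangle_swap aQ QP sNI iI sIP.
have [J iJ leJ] := IH I' (leq_trans ltI' ltn) sI'P iI'.
by exists J; rewrite -?cI'.
Qed.

End Reduction.

Theorem lemma5 (T : finType) (e : rel T) (esym : symmetric e) (eirr : irreflexive e)
  (X : {set T}) (k : int)
  (Hpf : pseudoforest e (~: X))
  (H1 : forall v, v \in X -> conf e (~: X) [set v] < #|X|)
  (H2 : forall u v, u \in X -> v \in X -> u != v -> ~~ e u v ->
          conf e (~: X) [set u; v] < #|X|)
  (H3 : forall u v w, u \in X -> v \in X -> w \in X ->
          u != v -> u != w -> v != w -> indep e [set u; v; w] ->
          #|X| <= conf e (~: X) [set u; v; w] ->
          exists Q, anchor_triangle e X Q /\ nbhd e Q = [set u; v; w])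
  (P : {set T}) (HP : component e (~: X) P)
  (HPnr : ~ nonredundant_anchor_triangle e X P)
  (HPc : forall Xp, chunk e X Xp -> conf e P Xp = 0) :
  (exists I : {set T}, indep e I /\ (k <= (#|I|)%:Z)%R) <->
  (exists I : {set T}, I \subset ~: P /\ indep e I /\
                       (k - (alpha e P)%:Z <= (#|I|)%:Z)%R).
Proof.
split=> [[I [iI leI]]|[I [sIP [iI leI]]]].
  exists (I :\: P); split; first by rewrite setDE subsetIr.
  split; first exact: indepS (subsetDl _ _) iI.
  have := leq_card_alpha (subsetIr I P) (indepS (subsetIl I P) iI).
  by have := cardsID P I; lia.
have [J iJ leJ] := extend_indep esym eirr Hpf H1 H2 H3 HP HPnr HPc sIP iI.
by exists J; split => //; lia.
Qed.
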